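(* \[ \mathbf{E}[1/p_r] = \begin{cases} \frac{3\sqrt{2}+5}{12p_i} & p_i \in (1/2, \frac{1+\sqrt{2}}{4}] \\ \frac{3+2\sqrt{2}}{6p_i} & p_i \in (\frac{1+\sqrt{2}}{4}, \frac{2+\sqrt{2}}{4}] \\ \frac{3\sqrt{2}+5}{6p_i} & p_i \in (\frac{2+\sqrt{2}}{4}, 1] \end{cases}, \qquad \mathbf{E}\left[1/p_r^2\right] = \begin{cases} \frac{5(3+2\sqrt{2})}{48p^2_i} & p_i \in (1/2, \frac{1+\sqrt{2}}{4}] \\ \frac{3+2\sqrt{2}}{6p^2_i} & p_i \in (\frac{1+\sqrt{2}}{4}, \frac{2+\sqrt{2}}{4}] \\ \frac{5(3+2\sqrt{2})}{12p^2_i} & p_i \in (\frac{2+\sqrt{2}}{4}, 1] \end{cases}. \]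
   Context: $\lg=\log_2$, and for real $x>0$, $p_x = x/2^{\lceil \lg x\rceil}$. In 2Merge$(A,B,T)$ with $T=(t_1,\dots,t_{i-2})$ sorted, $i$ even, $i\ge4$, after ensuring $A<B$, Step 2 compares $A$ with $t_{\lceil(1-2^{-r/2})i\rceil}$ for $r=1,2,\dots$ up to $2\lg i$ and stops at the first $r$ with $A<t_{\lceil(1-2^{-r/2})i\rceil}$; $r$ is this number of comparisons. The inserted elements are in uniformly random distinct positions, so given $A<B$, $\mathbf{Pr}[t_{\ell-1}<A<t_\ell]=(i-\ell)/\binom{i}{2}$, and $\mathbf{Pr}[r]=2^{-r}\pm O\!\left(\frac{1}{2^{r/2}i}\right)$. Define $w_r := (\sqrt{2}-1)2^{-r/2}i$ and $p_r := p_{w_r} = w_r/2^{\lceil\lg w_r\rceil}$. Expectations are over $r$. *)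

From Stdlib Require Export Reals.
From Coquelicot Require Export Coquelicot.
Open Scope R_scope.

Definition lg (x : R) : R := ln x / ln 2.

Definition Zceil (x : R) : Z := (- Int_part (- x))%Z.

Definition pw (x : R) : R := x / powerRZ 2 (Zceil (lg x)).

Definition w (i r : nat) : R := (sqrt 2 - 1) * Rpower 2 (- INR r / 2) * INR i.

Definition pr (i r : nat) : R := pw (w i r).

(* Idealized distribution of r: Pr[r] = 2^{-r}, r = 1, 2, 3, ... *)
Definition probr (r : nat) : R := (1/2) ^ r.

Definition is_expect (f : nat -> R) (v : R) : Prop :=
  is_series (fun n : nat => probr (S n) * f (S n)) v.

From Stdlib Require Import Lra Lia Psatz.

(** Writing [i = p_i 2^K], one finds [w_r = (2 - sqrt 2)/2 * p_i * 2^(K-m)] for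
    [r = 2m+1] and [w_r = (sqrt 2 - 1) * p_i * 2^(K-m-1)] for [r = 2m+2].  Since
    [p_x] only depends on [x] up to powers of 2, [p_r] takes one value [a] on odd
    [r] and another value [b] on even [r]; odd [r] carry total probability 2/3,
    so [E[f(p_r)] = (2 f(a) + f(b))/3].  In each of the three ranges of [p_i]
    the power of 2 bringing [a] and [b] into [(1/2, 1]] is 2 or 4, which gives
    the six closed forms. *)

Lemma Zceil_spec (t : R) : IZR (Zceil t) - 1 < t <= IZR (Zceil t).
Proof.
  destruct (archimed (- t)) as [Hup Hup1].
  unfold Zceil, Int_part; rewrite opp_IZR, minus_IZR; lra.
Qed.

Lemma Zceil_unique (t : R) (z : Z) : IZR z - 1 < t <= IZR z -> Zceil t = z.
Proof.
  intro Ht; unfold Zceil, Int_part.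
  enough (up (- t) = (1 - z)%Z) by lia.
  symmetry; apply tech_up; rewrite minus_IZR; lra.
Qed.

Lemma Zceil_add_IZR (t : R) (z : Z) : Zceil (t + IZR z) = (Zceil t + z)%Z.
Proof.
  apply Zceil_unique; rewrite plus_IZR; pose proof (Zceil_spec t); lra.
Qed.

Lemma ln2_pos : 0 < ln 2.
Proof. pose proof ln_lt_2; lra. Qed.

Lemma lg_mul_powerRZ (x : R) (z : Z) :
  0 < x -> lg (x * powerRZ 2 z) = lg x + IZR z.
Proof.
  intro Hx; pose proof ln2_pos.
  unfold lg; rewrite powerRZ_Rpower, ln_mult by (try apply exp_pos; lra).
  unfold Rpower; rewrite ln_exp; field; lra.
Qed.

Lemma pw_decomp (x : R) : x = pw x * powerRZ 2 (Zceil (lg x)).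
Proof.
  unfold pw; field; apply Rgt_not_eq, powerRZ_lt; lra.
Qed.

Lemma pw_pos (x : R) : 0 < x -> 0 < pw x.
Proof.
  intro Hx; unfold pw; apply Rdiv_lt_0_compat, powerRZ_lt; lra.
Qed.

Lemma pw_mul_powerRZ (x : R) (z : Z) : 0 < x -> pw (x * powerRZ 2 z) = pw x.
Proof.
  intro Hx; unfold pw.
  rewrite lg_mul_powerRZ, Zceil_add_IZR, powerRZ_add by (auto; lra).
  field; split; apply Rgt_not_eq, powerRZ_lt; lra.
Qed.

Lemma pw_mul_pow2 (x : R) (k : nat) : 0 < x -> pw (x * 2 ^ k) = pw x.
Proof. rewrite pow_powerRZ; apply pw_mul_powerRZ. Qed.

Lemma pw_div_pow2 (x : R) (k : nat) : 0 < x -> pw (x / 2 ^ k) = pw x.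
Proof.
  intro Hx; assert (H2k : 0 < 2 ^ k) by (apply pow_lt; lra).
  rewrite <- (pw_mul_pow2 (x / 2 ^ k) k) by (apply Rdiv_lt_0_compat; lra).
  f_equal; field; lra.
Qed.

Lemma pw_mul_pw (c x : R) : 0 < c -> 0 < x -> pw (c * x) = pw (c * pw x).
Proof.
  intros Hc Hx.
  rewrite (pw_decomp x) at 1; rewrite <- Rmult_assoc.
  apply pw_mul_powerRZ, Rmult_lt_0_compat, pw_pos; assumption.
Qed.

Lemma pw_id (y : R) : 1/2 < y <= 1 -> pw y = y.
Proof.
  intro Hy; pose proof ln2_pos.
  assert (Hln : - ln 2 < ln y <= 0).
  { rewrite <- ln_1, <- ln_Rinv by lra.
    split; [apply ln_increasing | apply ln_le]; lra. }
  assert (Hlg : IZR 0 - 1 < lg y <= IZR 0).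
  { unfold lg; split.
    - apply Rmult_lt_reg_r with (ln 2); auto; field_simplify; lra.
    - apply Rmult_le_reg_r with (ln 2); auto; field_simplify; lra. }
  unfold pw; rewrite (Zceil_unique _ _ Hlg); simpl; field.
Qed.

Lemma pw_eq_mul_pow2 (y : R) (k : nat) :
  0 < y -> 1/2 < y * 2 ^ k <= 1 -> pw y = y * 2 ^ k.
Proof. intros Hy Hk; rewrite <- (pw_mul_pow2 y k Hy); apply pw_id, Hk. Qed.

Lemma sqrt2_sq : sqrt 2 * sqrt 2 = 2.
Proof. apply sqrt_sqrt; lra. Qed.

Lemma sqrt2_bounds : 1.4 < sqrt 2 < 1.5.
Proof.
  pose proof sqrt2_sq; assert (0 < sqrt 2) by (apply sqrt_lt_R0; lra); nra.
Qed.

Lemma w_odd (i m : nat) : w i (S (2 * m)) = (2 - sqrt 2) / 2 * INR i / 2 ^ m.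
Proof.
  unfold w.
  replace (- INR (S (2 * m)) / 2) with (- INR m + - / 2)
    by (rewrite S_INR, mult_INR; simpl; field).
  rewrite Rpower_plus, !Rpower_Ropp, Rpower_pow, Rpower_sqrt by lra.
  pose proof sqrt2_sq; pose proof sqrt2_bounds.
  transitivity ((sqrt 2 - 1) * sqrt 2 / (sqrt 2 * sqrt 2) * INR i / 2 ^ m).
  - field; split; try apply pow_nonzero; lra.
  - rewrite sqrt2_sq; do 3 f_equal; lra.
Qed.

Lemma w_even (i m : nat) : w i (S (S (2 * m))) = (sqrt 2 - 1) * INR i / 2 ^ S m.
Proof.
  unfold w.
  replace (- INR (S (S (2 * m))) / 2) with (- INR (S m))
    by (rewrite !S_INR, mult_INR; simpl; field).
  rewrite Rpower_Ropp, Rpower_pow by lra.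
  field; apply pow_nonzero; lra.
Qed.

Lemma pr_odd (i m : nat) :
  (0 < i)%nat -> pr i (S (2 * m)) = pw ((2 - sqrt 2) / 2 * pw (INR i)).
Proof.
  intro Hi; apply lt_0_INR in Hi; pose proof sqrt2_bounds.
  unfold pr; rewrite w_odd, pw_div_pow2, pw_mul_pw by nra; reflexivity.
Qed.

Lemma pr_even (i m : nat) :
  (0 < i)%nat -> pr i (S (S (2 * m))) = pw ((sqrt 2 - 1) * pw (INR i)).
Proof.
  intro Hi; apply lt_0_INR in Hi; pose proof sqrt2_bounds.
  unfold pr; rewrite w_even, pw_div_pow2, pw_mul_pw by nra; reflexivity.
Qed.

Lemma is_expect_alternating (g : nat -> R) (X Y : R) :
  (forall m, g (S (2 * m)) = X) -> (forall m, g (S (S (2 * m))) = Y) ->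
  is_expect g ((2 * X + Y) / 3).
Proof.
  intros HX HY; unfold is_expect, probr.
  assert (Hterm : forall n, (X + Y) / 4 * (1/2) ^ n + (X - Y) / 4 * (-1/2) ^ n
                            = (1/2) ^ S n * g (S n)).
  { intro n; rewrite <- tech_pow_Rmult.
    destruct (Nat.Even_or_Odd n) as [[m ->] | [m ->]].
    - rewrite HX, !pow_mult.
      replace ((-1/2) ^ 2) with ((1/2) ^ 2) by field.
      set (q := ((1/2) ^ 2) ^ m); field.
    - rewrite Nat.add_1_r, HY, <- !tech_pow_Rmult, !pow_mult.
      replace ((-1/2) ^ 2) with ((1/2) ^ 2) by field.
      set (q := ((1/2) ^ 2) ^ m); field. }
  assert (G1 : is_series (fun n => (1/2) ^ n) (/ (1 - 1/2)))
    by (apply is_series_geom; rewrite Rabs_pos_eq; lra).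
  assert (G2 : is_series (fun n => (-1/2) ^ n) (/ (1 - -1/2)))
    by (apply is_series_geom; rewrite Rabs_left; lra).
  apply (is_series_scal_l ((X + Y) / 4)) in G1.
  apply (is_series_scal_l ((X - Y) / 4)) in G2.
  pose proof (is_series_plus _ _ _ _ G1 G2) as G.
  replace ((2 * X + Y) / 3) with
    ((X + Y) / 4 * / (1 - 1/2) + (X - Y) / 4 * / (1 - -1/2)) by field.
  exact (is_series_ext _ _ _ Hterm G).
Qed.

Lemma inv_half_two_sub_sqrt2 : / ((2 - sqrt 2) / 2) = 2 + sqrt 2.
Proof.
  pose proof sqrt2_sq; pose proof sqrt2_bounds.
  symmetry; apply Rmult_inv_r_uniq; lra.
Qed.

Lemma inv_sqrt2_sub_1 : / (sqrt 2 - 1) = sqrt 2 + 1.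
Proof.
  pose proof sqrt2_sq; pose proof sqrt2_bounds.
  symmetry; apply Rmult_inv_r_uniq; lra.
Qed.

Lemma is_expect_inv_pr (i ka kb : nat) (v1 v2 : R) :
  (0 < i)%nat ->
  1/2 < (2 - sqrt 2) / 2 * pw (INR i) * 2 ^ kb <= 1 ->
  1/2 < (sqrt 2 - 1) * pw (INR i) * 2 ^ ka <= 1 ->
  v1 = (2 * (2 + sqrt 2) / 2 ^ kb + (sqrt 2 + 1) / 2 ^ ka) / (3 * pw (INR i)) ->
  v2 = (2 * (6 + 4 * sqrt 2) / 4 ^ kb + (3 + 2 * sqrt 2) / 4 ^ ka)
         / (3 * pw (INR i) ^ 2) ->
  is_expect (fun r => / pr i r) v1 /\ is_expect (fun r => / (pr i r ^ 2)) v2.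
Proof.
  intros Hi Hrange_odd Hrange_even -> ->.
  set (P := pw (INR i)) in *.
  assert (HP : 0 < P) by (apply pw_pos, lt_0_INR, Hi).
  pose proof sqrt2_sq; pose proof sqrt2_bounds.
  assert (Hodd : forall m, pr i (S (2 * m)) = (2 - sqrt 2) / 2 * P * 2 ^ kb)
    by (intro m; rewrite pr_odd by exact Hi; apply pw_eq_mul_pow2; nra).
  assert (Heven : forall m, pr i (S (S (2 * m))) = (sqrt 2 - 1) * P * 2 ^ ka)
    by (intro m; rewrite pr_even by exact Hi; apply pw_eq_mul_pow2; nra).
  assert (Hpow4 : forall k, 4 ^ k = 2 ^ k * 2 ^ k)
    by (intro k; replace 4 with (2 * 2) by lra; apply Rpow_mult_distr).
  assert (Hka : 0 < 2 ^ ka) by (apply pow_lt; lra).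
  assert (Hkb : 0 < 2 ^ kb) by (apply pow_lt; lra).
  assert (Hinv_odd : / ((2 - sqrt 2) / 2 * P * 2 ^ kb) = (2 + sqrt 2) * / P * / 2 ^ kb)
    by (rewrite !Rinv_mult, inv_half_two_sub_sqrt2; reflexivity).
  assert (Hinv_even : / ((sqrt 2 - 1) * P * 2 ^ ka) = (sqrt 2 + 1) * / P * / 2 ^ ka)
    by (rewrite !Rinv_mult, inv_sqrt2_sub_1; reflexivity).
  assert (Hsq_odd : (2 + sqrt 2) ^ 2 = 6 + 4 * sqrt 2) by (simpl; lra).
  assert (Hsq_even : (sqrt 2 + 1) ^ 2 = 3 + 2 * sqrt 2) by (simpl; lra).
  split.
  - replace (_ / (3 * P)) with ((2 * / ((2 - sqrt 2) / 2 * P * 2 ^ kb)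
                                 + / ((sqrt 2 - 1) * P * 2 ^ ka)) / 3)
      by (rewrite Hinv_odd, Hinv_even; field; lra).
    apply is_expect_alternating; intro m; [rewrite Hodd | rewrite Heven]; reflexivity.
  - replace (_ / (3 * P ^ 2)) with ((2 * / ((2 - sqrt 2) / 2 * P * 2 ^ kb) ^ 2
                                     + / ((sqrt 2 - 1) * P * 2 ^ ka) ^ 2) / 3).
    + apply is_expect_alternating; intro m; [rewrite Hodd | rewrite Heven]; reflexivity.
    + rewrite <- !pow_inv, Hinv_odd, Hinv_even, !Rpow_mult_distr, Hsq_odd, Hsq_even,
        !pow_inv, !Hpow4.
      field; lra.
Qed.

Theorem lemma4 (i : nat) (Hev : Nat.even i = true) (H4 : (4 <= i)%nat) :
  let p_i := pw (INR i) in
  (1/2 < p_i <= (1 + sqrt 2) / 4 ->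
     is_expect (fun r => / pr i r) ((3 * sqrt 2 + 5) / (12 * p_i)) /\
     is_expect (fun r => / (pr i r ^ 2)) (5 * (3 + 2 * sqrt 2) / (48 * p_i ^ 2))) /\
  ((1 + sqrt 2) / 4 < p_i <= (2 + sqrt 2) / 4 ->
     is_expect (fun r => / pr i r) ((3 + 2 * sqrt 2) / (6 * p_i)) /\
     is_expect (fun r => / (pr i r ^ 2)) ((3 + 2 * sqrt 2) / (6 * p_i ^ 2))) /\
  ((2 + sqrt 2) / 4 < p_i <= 1 ->
     is_expect (fun r => / pr i r) ((3 * sqrt 2 + 5) / (6 * p_i)) /\
     is_expect (fun r => / (pr i r ^ 2)) (5 * (3 + 2 * sqrt 2) / (12 * p_i ^ 2))).
Proof.
  intro p_i.
  assert (Hi : (0 < i)%nat) by lia.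
  pose proof sqrt2_sq; pose proof sqrt2_bounds.
  split; [|split]; intro Hp;
    [ apply (is_expect_inv_pr i 2 2 _ _ Hi)
    | apply (is_expect_inv_pr i 1 2 _ _ Hi)
    | apply (is_expect_inv_pr i 1 1 _ _ Hi) ].
  all: fold p_i; simpl; first [field; lra | nra].
Qed.
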